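(* Let $T$ be a tree of order $n$ and diameter $d$ with maximum Wiener index, and let $x$ be a leaf of $T$. Then ${\rm ecc}(x)=d$.
   Context: All graphs are finite and simple. The Wiener index of a connected graph $G$ is $W(G)=\sum_{\{u,v\}\subseteq V(G)} d(u,v)$. A tree $T$ of order $n$ and diameter $d$ has maximum Wiener index if $W(T')\leq W(T)$ for every tree $T'$ of order $n$ and diameter $d$. A leaf is a vertex of degree $1$. The eccentricity ${\rm ecc}(v)$ of a vertex $v$ is the maximum distance from $v$ to a vertex of the graph. *)

From mathcomp Require Import all_boot.
Set Implicit Arguments. Unset Strict Implicit. Unset Printing Implicit Defensive.

Section Graphs.
Variables (V : finType) (e : rel V).

Definition simple_graph : Prop := symmetric e /\ irreflexive e.

Definition connected : Prop := forall u v : V, connect e u v.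

Definition acyclic : Prop := forall c : seq V, 3 <= size c -> ~~ ucycleb e c.

Definition is_tree : Prop := [/\ simple_graph, connected & acyclic].

Definition reach (k : nat) (u v : V) : bool :=
  [exists p : k.-tuple V, path e u p && (last u p == v)].

(* distance = least k with a walk of length k (shortest walks are paths of
   length < #|V| in a connected graph; returns #|V| if v unreachable) *)
Definition dist (u v : V) : nat := find (fun k => reach k u v) (iota 0 #|V|).

Definition ecc (u : V) : nat := \max_(v : V) dist u v.

Definition diameter : nat := \max_(u : V) ecc u.

(* sum over unordered pairs = half of the sum over ordered pairs *)
Definition wiener : nat := (\sum_(u : V) \sum_(v : V) dist u v)./2.

Definition leaf (x : V) : bool := #|[pred y | e x y]| == 1.

End Graphs.

From mathcomp Require Import all_boot zify.
Set Implicit Arguments. Unset Strict Implicit. Unset Printing Implicit Defensive.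

(* Suppose a leaf x has ecc x < d.  Grow a set S from {x}, keeping it a branch
   (joined to the rest of the tree by a single edge a-b) all of whose vertices
   have eccentricity < d, by absorbing b as long as b has exactly one other
   neighbour.  If b has no other neighbour, the complement of S is {b} and
   cannot realise the diameter.  Otherwise b has two neighbours c1, c2 outside S.
   Moving S from b to c_i (replacing the edge a-b by a-c_i) keeps the diameter,
   since it is realised outside S, and changes the Wiener index by
   |S| (D(c_i) - D(b)), where D(z) sums the distances from z to the vertices
   outside S.  As 2 D(b) < D(c1) + D(c2), one of these moves increases the
   Wiener index. *)

Section Descent.
Variables (V : finType) (r : rel V).

Definition descent (h : V -> V -> nat) :=
  forall u v, u != v -> exists2 w, r u w & h u v = (h w v).+1.

Lemma descent_connected h : descent h -> connected r.
Proof.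
move=> hD u v; move Dk: (h u v) => k; elim: k u Dk => [|k IH] u Dk;
  case: (eqVneq u v) => [->|neq]; rewrite ?connect0 //;
  have [w ruw Dw] := hD u v neq; rewrite Dw // in Dk.
by case: Dk => /IH; apply: connect_trans (connect1 ruw).
Qed.

Lemma leq_descent (g h : V -> V -> nat) :
    (forall u, g u u = 0) -> (forall u w v, r u w -> g u v <= (g w v).+1) ->
  descent h -> forall u v, g u v <= h u v.
Proof.
move=> g0 gS hD u v; move Dk: (h u v) => k; elim: k u Dk => [|k IH] u Dk;
  case: (eqVneq u v) => [->|neq]; rewrite ?g0 //;
  have [w ruw Dw] := hD u v neq; rewrite Dw // in Dk.
by case: Dk => /IH le_gw; apply: leq_trans (gS u w v ruw) _.
Qed.

End Descent.

Section Distance.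
Variables (V : finType) (e : rel V).

Lemma reachP k u v :
  reflect (exists p : seq V, [/\ size p = k, path e u p & last u p = v]) (reach e k u v).
Proof.
apply: (iffP existsP) => [[p /andP[pp /eqP lp]] | [p [sp pp lp]]].
  by exists (tval p); rewrite size_tuple.
have sp' : size p == k by rewrite sp.
by exists (Tuple sp'); rewrite /= pp lp eqxx.
Qed.

Lemma reach0 u v : reach e 0 u v = (u == v).
Proof.
apply/reachP/eqP => [[p [sp _ <-]]|->]; first by case: p sp.
by exists [::].
Qed.

Lemma reachS k u v : reach e k.+1 u v -> exists2 w, e u w & reach e k w v.
Proof.
move=> /reachP [[|w p] [//= [sp] /andP[euw pp] lp]].
by exists w => //; apply/reachP; exists p.
Qed.

Lemma reach_cons k u w v : e u w -> reach e k w v -> reach e k.+1 u v.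
Proof.
move=> euw /reachP [p [sp pp lp]]; apply/reachP; exists (w :: p).
by rewrite /= sp euw pp.
Qed.

Lemma dist_le_reach k u v : k < #|V| -> reach e k u v -> dist e u v <= k.
Proof.
rewrite /dist => hk hr; rewrite leqNgt; apply/negP => hlt.
by have := before_find 0 hlt; rewrite nth_iota // add0n hr.
Qed.

(* A shortest walk is a path, so its length is below [#|V|]. *)
Lemma reach_dist u v : connect e u v -> reach e (dist e u v) u v /\ dist e u v < #|V|.
Proof.
move=> /connectP[p pp ->]; case: (shortenP pp) => p' pp' up' _.
have hs : (size p').+1 <= #|V| by move/card_uniqP: up' => /= <-; apply: max_card.
set P := fun k => reach e k u (last u p').
have hh : has P (iota 0 #|V|).
  apply/hasP; exists (size p'); first by rewrite mem_iota.
  by apply/reachP; exists p'.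
have hf : find P (iota 0 #|V|) < #|V| by rewrite -[X in _ < X](size_iota 0 #|V|) -has_find.
by split => //; have := nth_find 0 hh; rewrite nth_iota.
Qed.

Lemma distnn u : dist e u u = 0.
Proof.
apply/eqP; rewrite -leqn0; apply: dist_le_reach; last by rewrite reach0.
by apply/card_gt0P; exists u.
Qed.

Lemma dist_le_ecc u v : dist e u v <= ecc e u.
Proof. exact: (@leq_bigmax V (fun v => dist e u v)). Qed.

Lemma ecc_le_diameter u : ecc e u <= diameter e.
Proof. exact: (@leq_bigmax V (ecc e)). Qed.

Lemma dist_le_diameter u v : dist e u v <= diameter e.
Proof. exact: leq_trans (dist_le_ecc u v) (ecc_le_diameter u). Qed.

Lemma diameter_attained : 0 < #|V| -> exists u v, dist e u v = diameter e.
Proof.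
move=> V0; have [u Du] := eq_bigmax (ecc e) V0; have [v Dv] := eq_bigmax (dist e u) V0.
by exists u, v; rewrite /diameter Du /ecc Dv.
Qed.

Hypothesis e_connected : connected e.

Lemma dist_eq0 u v : dist e u v = 0 -> u = v.
Proof. by have [+ _] := reach_dist (e_connected u v) => /[swap] -> /[!reach0] /eqP. Qed.

Lemma leq_dist_adj u w v : e u w -> dist e u v <= (dist e w v).+1.
Proof.
move=> euw; have [rw lw] := reach_dist (e_connected w v).
have [_ lu] := reach_dist (e_connected u v).
case: (ltnP (dist e w v).+1 #|V|) => h; last exact: leq_trans (ltnW lu) h.
exact: dist_le_reach h (reach_cons euw rw).
Qed.

Lemma dist_descent : descent e (dist e).
Proof.
move=> u v neq; have [r l] := reach_dist (e_connected u v).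
case E: (dist e u v) r => [|k] r; first by rewrite reach0 (negbTE neq) in r.
have [w euw rw] := reachS r; exists w => //.
have hk : k < #|V| by rewrite E in l; apply: ltnW.
have := dist_le_reach hk rw; have := leq_dist_adj v euw; lia.
Qed.

Lemma dist_triangle u w v : dist e u v <= dist e u w + dist e w v.
Proof.
suff: dist e u v - dist e w v <= dist e u w by lia.
apply: (leq_descent (g := fun u w => dist e u v - dist e w v)) dist_descent u w.
  by move=> z; rewrite subnn.
by move=> x y z /(leq_dist_adj v); lia.
Qed.

Hypothesis e_sym : symmetric e.

Lemma dist_sym u v : dist e u v = dist e v u.
Proof.
suff le_sym x y : dist e y x <= dist e x y by apply/eqP; rewrite eqn_leq !le_sym.
apply: (leq_descent (g := fun x y => dist e y x)) dist_descent x y; first exact: distnn.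
move=> x' w z ex'w; have ewx' : e w x' by rewrite e_sym.
have := dist_triangle z w x'; have := leq_dist_adj x' ewx'; rewrite distnn; lia.
Qed.

Lemma geodesic u v : exists p, [/\ path e u p, last u p = v &
  forall z, z \in p -> dist e z v < dist e u v].
Proof.
move Dk: (dist e u v) => k; elim: k u Dk => [|k IH] u Dk.
  by exists [::]; split => //; exact: dist_eq0 Dk.
have neq : u != v by apply: contra_eqN Dk => /eqP ->; rewrite distnn.
have [w euw Dw] := dist_descent neq; rewrite Dk in Dw; case: Dw => Dw.
have [p [pp lp hp]] := IH w (esym Dw).
exists (w :: p); split => //=; first by rewrite euw.
by move=> z; rewrite inE => /predU1P[->|/hp]; lia.
Qed.

End Distance.

Lemma descent_dist (V : finType) (r : rel V) (f : V -> V -> nat) :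
    (forall u, f u u = 0) -> (forall u w v, r u w -> f u v <= (f w v).+1) -> descent r f ->
  connected r /\ dist r =2 f.
Proof.
move=> f0 fS fD; have r_con := descent_connected fD; split => // u v.
apply/eqP; rewrite eqn_leq (leq_descent f0 fS (dist_descent r_con)) andbT.
exact: leq_descent (distnn r) (fun x y z => leq_dist_adj r_con z) fD u v.
Qed.

Definition unique_closer_nbr (V : finType) (r : rel V) := forall b v w z,
  r b w -> r b z -> dist r w v <= dist r b v -> dist r z v <= dist r b v -> w = z.

(* On a cycle, the vertex farthest from a fixed vertex of the cycle has two
   distinct cycle neighbours, both no farther. *)
Lemma unique_closer_nbr_acyclic (V : finType) (r : rel V) :
  symmetric r -> unique_closer_nbr r -> acyclic r.
Proof.
move=> r_sym uniq_nbr [|v0 c'] //= size_c; apply/negP => /andP[cyc_c uniq_c].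
have [b0 b0c b0_max] := @arg_maxnP V v0 (mem (v0 :: c')) (dist r ^~ v0) (mem_head _ _).
have [i s Ds] := rot_to b0c.
have : ucycleb r (b0 :: s) by rewrite /ucycleb -Ds rot_cycle rot_uniq cyc_c uniq_c.
have s_c z : z \in s -> z \in v0 :: c' by move=> zs; rewrite -(mem_rot i) Ds inE zs orbT.
have size_s : 2 <= size s by have := congr1 size Ds; rewrite size_rot /=; lia.
case: s Ds s_c size_s => [|w [|y s]] // _ s_c _.
rewrite /ucycleb /= rcons_path => /and5P[/and4P[rb0w _ _ rlb0] _ w_notin _ _].
have w_last : w != last y s by apply: contraNneq w_notin => ->; exact: mem_last.
move/eqP: w_last; apply; apply: (uniq_nbr b0 v0) => //; first by rewrite r_sym.
  by apply: b0_max; apply: s_c; rewrite mem_head.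
by apply: b0_max; apply: s_c; rewrite inE mem_last orbT.
Qed.

Section Tree.
Variables (V : finType) (e : rel V).
Hypotheses (e_sym : symmetric e) (e_irr : irreflexive e).
Hypotheses (e_connected : connected e) (e_acyclic : acyclic e).

Lemma path_rev x p : path e x p ->
  path e (last x p) (rev (belast x p)) /\ last (last x p) (rev (belast x p)) = x.
Proof.
move=> px; split; first by rewrite rev_path (eq_path (e' := e)) // => u v; rewrite e_sym.
by case: p {px} => //= y p; rewrite rev_cons last_rcons.
Qed.

Lemma acyclic_nbr_walk b w z p : e b w -> e b z -> w != z ->
  path e w p -> last w p = z -> b \in w :: p.
Proof.
move=> ebw ebz wz pw; case: (shortenP pw) => q pq uq q_p lq; apply: contraT => bNp.
have bNq : b \notin w :: q.
  by apply: contra bNp; rewrite !inE => /predU1P[->|/q_p ->]; rewrite ?eqxx ?orbT.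
have size_q : 0 < size q by case: q {pq uq q_p bNq} lq => //= lq; rewrite lq eqxx in wz.
have := e_acyclic (c := b :: w :: q); rewrite /= !ltnS size_q => /(_ isT).
rewrite /ucycleb /= rcons_path ebw pq lq e_sym ebz bNq.
by move: uq => /= /andP[-> ->].
Qed.

Lemma tree_unique_closer_nbr : unique_closer_nbr e.
Proof.
move=> b v w z ebw ebz w_le z_le; apply/eqP; apply: contraT => wz.
have [pw [ppw lpw hpw]] := geodesic e_connected w v.
have [pz [ppz lpz hpz]] := geodesic e_connected z v.
have [pr lr] := path_rev ppz.
have far y : y \in pw ++ rev (belast z pz) -> b != y.
  rewrite mem_cat mem_rev => /orP[/hpw|/mem_belast]; first by apply: contraTneq => <-; lia.
  rewrite inE => /predU1P[->|/hpz]; first by apply: contraTneq ebz => ->; rewrite e_irr.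
  by apply: contraTneq => <-; lia.
have := acyclic_nbr_walk ebw ebz wz (p := pw ++ rev (belast z pz)).
rewrite cat_path ppw lpw -lpz pr last_cat lpw -lpz lr inE => /(_ isT erefl).
case/predU1P => [Db|/far]; last by rewrite eqxx.
by rewrite Db e_irr in ebw.
Qed.

End Tree.

Section Cut.
Variables (V : finType) (e : rel V) (S : {set V}) (a b : V).
Hypotheses (e_connected : connected e) (eab : e a b).
Hypothesis cut : forall s t, s \in S -> t \notin S -> e s t -> s = a /\ t = b.

Lemma dist_across_cut s t : s \in S -> t \notin S -> dist e s t = dist e s a + (dist e b t).+1.
Proof.
move=> sS tS; apply/eqP; rewrite eqn_leq; apply/andP; split.
  by have := dist_triangle e_connected s a t; have := leq_dist_adj e_connected t eab; lia.
move Dk: (dist e s t) => k; elim: k s sS Dk => [|k IH] s sS Dk.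
  by move: Dk => /(dist_eq0 e_connected) Ds; rewrite -Ds sS in tS.
have st : s != t by apply: contraNneq tS => <-.
have [w esw Dw] := dist_descent e_connected st; rewrite Dk in Dw; case: Dw => Dw.
case: (boolP (w \in S)) => wS; last first.
  by have [Ds Dw'] := cut sS wS esw; rewrite Ds distnn Dw Dw'.
have := IH w wS (esym Dw); have := leq_dist_adj e_connected a esw; lia.
Qed.

End Cut.

Section Regraft.
Variables (V : finType) (e : rel V) (S : {set V}) (a c : V).

(* Cut the edges leaving [S] and join [a \in S] to [c] instead. *)
Definition regraft : rel V := fun u v =>
  [|| (u == a) && (v == c), (u == c) && (v == a) | e u v && ((u \in S) == (v \in S))].

Local Notation d := (dist e).

(* The distance after regrafting: paths across the cut use the new edge a-c. *)
Definition regraft_dist u v :=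
  if (u \in S) == (v \in S) then d u v
  else if u \in S then d u a + (d c v).+1 else d u c + (d a v).+1.

Lemma regraft_dist_same u v : (u \in S) = (v \in S) -> regraft_dist u v = d u v.
Proof. by rewrite /regraft_dist => ->; rewrite eqxx. Qed.

Lemma regraft_dist_in_out u v :
  u \in S -> v \notin S -> regraft_dist u v = d u a + (d c v).+1.
Proof. by rewrite /regraft_dist => -> /negbTE ->. Qed.

Lemma regraft_dist_out_in u v :
  u \notin S -> v \in S -> regraft_dist u v = d u c + (d a v).+1.
Proof. by rewrite /regraft_dist => /negbTE -> ->. Qed.

Lemma regraftP u w : regraft u w ->
  [\/ u = a /\ w = c, u = c /\ w = a | e u w /\ (u \in S) = (w \in S)].
Proof.
by case/or3P => [/andP[/eqP-> /eqP->]|/andP[/eqP-> /eqP->]|/andP[? /eqP ?]];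
  [apply: Or31 | apply: Or32 | apply: Or33].
Qed.

Lemma regraft_same u w : e u w -> (u \in S) = (w \in S) -> regraft u w.
Proof. by move=> euw uw; rewrite /regraft euw uw eqxx !orbT. Qed.

End Regraft.

Lemma regraftC (V : finType) (e : rel V) (S : {set V}) (a c : V) :
  regraft e (~: S) c a =2 regraft e S a c.
Proof.
move=> u v; rewrite /regraft !inE (inj_eq negb_inj).
by case: (u == a); case: (v == c); case: (u == c); case: (v == a).
Qed.

Lemma regraft_distC (V : finType) (e : rel V) (S : {set V}) (a c : V) :
  regraft_dist e (~: S) c a =2 regraft_dist e S a c.
Proof.
by move=> u v; rewrite /regraft_dist !inE (inj_eq negb_inj); case: (u \in S); case: (v \in S).
Qed.

Section RegraftTree.
Variables (V : finType) (e : rel V).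
Hypotheses (e_sym : symmetric e) (e_irr : irreflexive e).
Hypotheses (e_connected : connected e) (e_acyclic : acyclic e).
Variables (S : {set V}) (a c : V).
Hypotheses (aS : a \in S) (cS : c \notin S).

Local Notation d := (dist e).
Local Notation f := (regraft_dist e S a c).

Lemma regraft_sym : symmetric (regraft e S a c).
Proof.
move=> u v; rewrite /regraft e_sym [(v \in S) == _]eq_sym.
by case: (u == a); case: (v == c); case: (u == c); case: (v == a).
Qed.

Lemma regraft_irr : irreflexive (regraft e S a c).
Proof.
have ac : a != c by apply: contraNneq cS => <-.
move=> u; rewrite /regraft e_irr /= orbF.
by apply/negP => /orP[] /andP[/eqP-> /eqP E]; rewrite E eqxx in ac.
Qed.

Lemma regraft_dist_nn u : f u u = 0.
Proof. by rewrite regraft_dist_same // distnn. Qed.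

Lemma regraft_dist_adj u w v : regraft e S a c u w -> f u v <= (f w v).+1.
Proof.
have adj := leq_dist_adj e_connected.
case/regraftP => [[-> ->]|[-> ->]|[euw Suw]].
- case: (boolP (v \in S)) => vS.
    by rewrite regraft_dist_same ?aS ?vS // regraft_dist_out_in // distnn; lia.
  by rewrite regraft_dist_in_out // regraft_dist_same ?(negbTE vS) ?(negbTE cS) // distnn.
- case: (boolP (v \in S)) => vS.
    by rewrite regraft_dist_out_in // regraft_dist_same ?aS ?vS // distnn.
  by rewrite regraft_dist_same ?(negbTE vS) ?(negbTE cS) // regraft_dist_in_out // distnn; lia.
have Sw := Suw; case: (boolP (u \in S)) Sw => uS Sw; case: (boolP (v \in S)) => vS.
- by rewrite !regraft_dist_same -?Suw ?uS ?vS //; apply: adj.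
- by rewrite !regraft_dist_in_out -?Suw //; have := adj _ _ a euw; lia.
- by rewrite !regraft_dist_out_in -?Suw //; have := adj _ _ c euw; lia.
- by rewrite !regraft_dist_same -?Suw ?(negbTE uS) ?(negbTE vS) //; apply: adj.
Qed.

Lemma regraft_unique_closer_in b v w z : b \in S ->
    regraft e S a c b w -> regraft e S a c b z -> f w v <= f b v -> f z v <= f b v ->
  w = z.
Proof.
have uniq_e := tree_unique_closer_nbr e_sym e_irr e_connected e_acyclic.
move=> bS; case: (boolP (v \in S)) => vS.
  have closer y : regraft e S a c b y -> f y v <= f b v -> e b y /\ d y v <= d b v.
    case/regraftP => [[-> ->]|[Eb _]|[eby Sby]]; last by rewrite !regraft_dist_same -?Sby ?bS ?vS.
      rewrite regraft_dist_out_in // regraft_dist_same ?aS // distnn.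
      by rewrite (dist_sym e_connected e_sym); lia.
    by move: cS; rewrite -Eb bS.
  by move=> bw bz /(closer _ bw)[? ?] /(closer _ bz)[? ?]; apply: (uniq_e b v).
case: (eqVneq b a) => [->|ba].
  have closer y : regraft e S a c a y -> f y v <= f a v -> y = c.
    case/regraftP => [[_ ->] //|[Ea _]|[eay Say]]; first by move: cS; rewrite -Ea aS.
    rewrite !regraft_dist_in_out -?Say // distnn leq_add2r leqn0 => /eqP/(dist_eq0 e_connected) ya.
    by rewrite ya e_irr in eay.
  by move=> aw az /(closer _ aw) -> /(closer _ az) ->.
have closer y : regraft e S a c b y -> f y v <= f b v -> e b y /\ d y a <= d b a.
  case/regraftP => [[Eb _]|[Eb _]|[eby Sby]]; first by rewrite Eb eqxx in ba.
    by move: cS; rewrite -Eb bS.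
  by rewrite !regraft_dist_in_out -?Sby // leq_add2r.
by move=> bw bz /(closer _ bw)[? ?] /(closer _ bz)[? ?]; apply: (uniq_e b a).
Qed.

End RegraftTree.

(* By [regraftC] and [regraft_distC], the case [b \notin S] is the case
   [b \in S] for the complement of [S], with [a] and [c] exchanged. *)
Lemma regraft_unique_closer (V : finType) (e : rel V) (S : {set V}) (a c b v w z : V) :
    symmetric e -> irreflexive e -> connected e -> acyclic e -> a \in S -> c \notin S ->
    regraft e S a c b w -> regraft e S a c b z ->
    regraft_dist e S a c w v <= regraft_dist e S a c b v ->
    regraft_dist e S a c z v <= regraft_dist e S a c b v ->
  w = z.
Proof.
move=> e_sym e_irr e_con e_acyc aS cS; case: (boolP (b \in S)) => bS.
  exact: regraft_unique_closer_in.
rewrite -!(regraftC e S a c) -!(regraft_distC e S a c).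
by apply: regraft_unique_closer_in; rewrite ?inE ?negbK.
Qed.

Lemma diametral_pair_out (V : finType) (e : rel V) (S : {set V}) :
    connected e -> symmetric e -> 0 < #|V| -> {in S, forall s, ecc e s < diameter e} ->
  exists u v, [/\ u \notin S, v \notin S & dist e u v = diameter e].
Proof.
move=> e_con e_sym V0 ecc_small; have [u [v Duv]] := diameter_attained e V0.
have notS x y : dist e x y = diameter e -> x \notin S.
  by move=> Dxy; apply/negP => /ecc_small; rewrite -Dxy ltnNge dist_le_ecc.
exists u, v; split => //; first exact: notS Duv.
by apply: (notS v u); rewrite dist_sym.
Qed.

Definition dist_out (V : finType) (e : rel V) (S : {set V}) (z : V) :=
  \sum_(v in ~: S) dist e z v.

Section RegraftBranch.
Variables (V : finType) (e : rel V).
Hypotheses (e_sym : symmetric e) (e_irr : irreflexive e).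
Hypotheses (e_connected : connected e) (e_acyclic : acyclic e).
Variables (S : {set V}) (a b c : V).
Hypotheses (aS : a \in S) (bS : b \notin S) (cS : c \notin S) (eab : e a b) (ebc : e b c).
Hypothesis cut : forall s t, s \in S -> t \notin S -> e s t -> s = a /\ t = b.

Local Notation d := (dist e).
Local Notation f := (regraft_dist e S a c).
Local Notation e' := (regraft e S a c).

Let across := dist_across_cut e_connected eab cut.
Let ds := dist_sym e_connected e_sym.

Lemma regraft_descent : descent e' f.
Proof.
have step := dist_descent e_connected.
move=> u v uv; case: (boolP (u \in S)) => uS; case: (boolP (v \in S)) => vS.
- have [w euw Dw] := step u v uv; case: (boolP (w \in S)) => wS.
    by exists w; rewrite ?regraft_same ?uS ?wS // !regraft_dist_same ?uS ?vS ?wS.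
  have [Du Dw'] := cut uS wS euw; subst u w.
  by move: Dw; rewrite (ds a v) (ds b v) (across vS bS) distnn; lia.
- case: (eqVneq u a) => [->|ua].
    exists c; first by rewrite /regraft !eqxx.
    by rewrite regraft_dist_in_out // regraft_dist_same ?(negbTE cS) ?(negbTE vS) // distnn.
  have [w euw Dw] := step u a ua; have wS : w \in S.
    by apply: contraT => wS; have [Du _] := cut uS wS euw; rewrite Du eqxx in ua.
  by exists w; rewrite ?regraft_same ?uS ?wS // !regraft_dist_in_out // Dw.
- case: (eqVneq u c) => [->|uc].
    exists a; first by rewrite /regraft !eqxx orbT.
    by rewrite regraft_dist_out_in // regraft_dist_same ?aS ?vS // distnn.
  have [w euw Dw] := step u c uc; case: (boolP (w \in S)) => wS.
    have [Dw' Du] := cut wS uS (etrans (e_sym w u) euw).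
    by move: Dw; rewrite Du Dw' (across aS cS) distnn; lia.
  by exists w; rewrite ?regraft_same ?(negbTE uS) ?(negbTE wS) // !regraft_dist_out_in // Dw.
- have [w euw Dw] := step u v uv; case: (boolP (w \in S)) => wS.
    have [Dw' Du] := cut wS uS (etrans (e_sym w u) euw).
    by move: Dw; rewrite Du Dw' (across aS vS) distnn; lia.
  exists w; rewrite ?regraft_same ?(negbTE uS) ?(negbTE wS) //.
  by rewrite !regraft_dist_same ?(negbTE uS) ?(negbTE vS) ?(negbTE wS).
Qed.

Lemma regraft_connected_dist : connected e' /\ dist e' =2 f.
Proof.
apply: descent_dist regraft_descent; first exact: regraft_dist_nn.
exact: regraft_dist_adj.
Qed.

Lemma regraft_tree : is_tree e'.
Proof.
have [e'_connected dist_e'] := regraft_connected_dist.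
have e'_sym := regraft_sym e_sym S a c.
split=> //; first by split; [|exact: regraft_irr].
apply: unique_closer_nbr_acyclic => // b0 v w z; rewrite !dist_e'.
exact: regraft_unique_closer.
Qed.

Hypothesis ecc_small : {in S, forall s, ecc e s < diameter e}.

Lemma diameter_regraft : diameter e' = diameter e.
Proof.
have [_ dist_e'] := regraft_connected_dist.
have ecb : e c b by rewrite e_sym.
apply/eqP; rewrite eqn_leq; apply/andP; split.
  apply/bigmax_leqP => u _; apply/bigmax_leqP => v _; rewrite dist_e'.
  case: (boolP (u \in S)) => uS; case: (boolP (v \in S)) => vS.
  - by rewrite regraft_dist_same ?uS ?vS ?dist_le_diameter.
  - rewrite regraft_dist_in_out //; have := across uS vS.
    have := leq_dist_adj e_connected v ecb; have := ecc_small uS; have := dist_le_ecc e u v; lia.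
  - rewrite regraft_dist_out_in // (ds a v) (ds u c); have := across vS uS.
    have := leq_dist_adj e_connected u ecb; have := ecc_small vS; have := dist_le_ecc e v u; lia.
  - by rewrite regraft_dist_same ?(negbTE uS) ?(negbTE vS) ?dist_le_diameter.
have V0 : 0 < #|V| by apply/card_gt0P; exists a.
have [u [v [uS vS <-]]] := diametral_pair_out e_connected e_sym V0 ecc_small.
by have := dist_le_diameter e' u v; rewrite dist_e' regraft_dist_same ?(negbTE uS) ?(negbTE vS).
Qed.

Lemma wiener_regraft : wiener e' + #|S| * dist_out e S b = wiener e + #|S| * dist_out e S c.
Proof.
have [_ dist_e'] := regraft_connected_dist.
pose H z u v := if (u \in S) && (v \notin S) then d z v else 0.
have H_sum z : \sum_u \sum_v (H z u v + H z v u) = 2 * (#|S| * dist_out e S z).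
  have half : \sum_u \sum_v H z u v = #|S| * dist_out e S z.
    rewrite -sum_nat_const [RHS]big_mkcond /=; apply: eq_bigr => u _.
    rewrite /H /dist_out; case: (u \in S) => /=; last exact: big1.
    by rewrite [RHS]big_mkcond; apply: eq_bigr => v _; rewrite inE.
  rewrite (eq_bigr (fun u => \sum_v H z u v + \sum_v H z v u)) => [|u _]; last exact: big_split.
  by rewrite big_split /= [X in _ + X]exchange_big /= half; lia.
(* Only the pairs crossing the cut change distance, by [d c v - d b v]. *)
have pointwise u v : f u v + (H b u v + H b v u) = d u v + (H c u v + H c v u).
  rewrite /H; case: (boolP (u \in S)) => uS; case: (boolP (v \in S)) => vS /=.
  - by rewrite regraft_dist_same ?uS ?vS.
  - by rewrite regraft_dist_in_out // (across uS vS); lia.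
  - by rewrite regraft_dist_out_in // (ds u v) (across vS uS) (ds u c) (ds a v); lia.
  - by rewrite regraft_dist_same ?(negbTE uS) ?(negbTE vS).
have : \sum_u \sum_v dist e' u v + 2 * (#|S| * dist_out e S b) =
       \sum_u \sum_v d u v + 2 * (#|S| * dist_out e S c).
  rewrite -!H_sum -!big_split /=; apply: eq_bigr => u _; rewrite -!big_split /=.
  by apply: eq_bigr => v _; rewrite dist_e' pointwise.
by rewrite /wiener -!divn2; lia.
Qed.

End RegraftBranch.

Lemma dist_out_nbrs_lt (V : finType) (e : rel V) (S : {set V}) (b c1 c2 : V) :
    symmetric e -> irreflexive e -> connected e -> acyclic e ->
    b \notin S -> e b c1 -> e b c2 -> c1 != c2 ->
  2 * dist_out e S b < dist_out e S c1 + dist_out e S c2.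
Proof.
move=> e_sym e_irr e_con e_acyc bS ebc1 ebc2 c12.
have uniq_e := tree_unique_closer_nbr e_sym e_irr e_con e_acyc.
have mid v : 2 * dist e b v <= dist e c1 v + dist e c2 v.
  have := leq_dist_adj e_con v ebc1; have := leq_dist_adj e_con v ebc2.
  case: (leqP (dist e c1 v) (dist e b v)) => le1; case: (leqP (dist e c2 v) (dist e b v)) => le2;
    try lia.
  by move: c12; rewrite (uniq_e b v c1 c2) ?eqxx.
have far c : e b c -> 0 < dist e c b.
  by move=> ebc; rewrite lt0n; apply: contraTneq ebc => /(dist_eq0 e_con) ->; rewrite e_irr.
rewrite /dist_out big_distrr -big_split /= (bigD1 b) ?inE //= [X in _ < X](bigD1 b) ?inE //=.
rewrite distnn muln0 add0n; have := far _ ebc1; have := far _ ebc2.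
have : \sum_(v in ~: S | v != b) 2 * dist e b v <=
       \sum_(v in ~: S | v != b) (dist e c1 v + dist e c2 v) by apply: leq_sum => v _.
lia.
Qed.

Definition branch (V : finType) (e : rel V) (S : {set V}) (a b : V) :=
  [/\ a \in S, b \notin S, e a b & forall s t, s \in S -> t \notin S -> e s t -> s = a /\ t = b].

Lemma branch_nbr_out (V : finType) (e : rel V) (S : {set V}) (a b c : V) :
  symmetric e -> branch e S a b -> e b c -> c != a -> c \notin S.
Proof.
move=> e_sym [_ bS _ cut] ebc ca; apply/negP => cS.
by have [Dc _] := cut c b cS bS (etrans (e_sym c b) ebc); rewrite Dc eqxx in ca.
Qed.

Section Growth.
Variables (V : finType) (e : rel V).
Hypotheses (e_sym : symmetric e) (e_irr : irreflexive e) (e_connected : connected e).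

Local Notation d := (dist e).

Lemma branch_grow S a b c :
    branch e S a b -> {in S, forall s, ecc e s < diameter e} ->
    e b c -> c != a -> (forall z, e b z -> z != a -> z = c) ->
  branch e (b |: S) b c /\ {in b |: S, forall s, ecc e s < diameter e}.
Proof.
move=> brS ecc_small ebc ca only_c; have cS := branch_nbr_out e_sym brS ebc ca.
have [aS bS eab cut] := brS.
have cb : c != b by apply: contraTneq ebc => ->; rewrite e_irr.
split.
  split; rewrite ?setU11 ?inE ?negb_or ?cb //.
  move=> s t; rewrite !inE negb_or => /orP[/eqP->|sS] /andP[tb tS] est.
    by split => //; apply: only_c est _; apply: contraNneq tS => ->.
  by have [_ Dt] := cut s t sS tS est; rewrite Dt eqxx in tb.
move=> s; rewrite !inE => /orP[/eqP->|/ecc_small //].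
have lt_diam v : d b v < diameter e.
  case: (boolP (v \in S)) => vS.
    by rewrite dist_sym //; apply: leq_ltn_trans (dist_le_ecc e v b) (ecc_small v vS).
  have := dist_across_cut e_connected eab cut aS vS; rewrite distnn add0n => Dav.
  by have := dist_le_ecc e a v; have := ecc_small a aS; lia.
have : ecc e b <= (diameter e).-1 by apply/bigmax_leqP => v _; have := lt_diam v; lia.
have := ecc_small a aS; lia.
Qed.

Lemma branch_dead_end S a b :
  branch e S a b -> {in S, forall s, ecc e s < diameter e} -> (forall z, e b z -> z = a) -> False.
Proof.
move=> [aS bS eab cut] ecc_small only_a.
have out_b t : t \notin S -> t = b.
  move=> tS; apply/eqP; apply: contraT => tb; rewrite eq_sym in tb.
  have [w ebw Dbt] := dist_descent e_connected tb; rewrite (only_a w ebw) in Dbt.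
  by have := dist_across_cut e_connected eab cut aS tS; rewrite distnn; lia.
have V0 : 0 < #|V| by apply/card_gt0P; exists a.
have [u [v [/out_b -> /out_b -> Dbb]]] := diametral_pair_out e_connected e_sym V0 ecc_small.
by have := ecc_small a aS; rewrite -Dbb distnn.
Qed.

Lemma branch_fork S a b :
    branch e S a b -> {in S, forall s, ecc e s < diameter e} ->
  exists S a b c1 c2, [/\ branch e S a b, {in S, forall s, ecc e s < diameter e},
    e b c1, e b c2 & [&& c1 != a, c2 != a & c1 != c2]].
Proof.
have [n] := ubnP #|~: S|; elim: n S a b => // n IH S a b ltSn brS ecc_small.
have [_ bS _ _] := brS.
case: (pickP (fun z => e b z && (z != a))) => [c1 /andP[ebc1 c1a] | no_c1]; last first.
  exfalso; apply: (branch_dead_end brS ecc_small) => z ebz.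
  by apply/eqP; have := no_c1 z; rewrite /= ebz => /negbFE.
case: (pickP (fun z => [&& e b z, z != a & z != c1])) => [c2 /and3P[ebc2 c2a c2c1] | no_c2].
  by exists S, a, b, c1, c2; split; rewrite // c1a c2a eq_sym c2c1.
have only_c1 z : e b z -> z != a -> z = c1.
  by move=> ebz za; apply/eqP; have := no_c2 z; rewrite /= ebz za => /negbFE.
have [brS' ecc_small'] := branch_grow brS ecc_small ebc1 c1a only_c1.
have lt_card : #|~: (b |: S)| < #|~: S|.
  apply: proper_card; rewrite setCU; apply/properP.
  by split; [exact: subsetIr | exists b; rewrite !inE ?eqxx].
by apply: (IH (b |: S) b c1) => //; lia.
Qed.

End Growth.

Lemma exists_wiener_gt (V : finType) (e : rel V) (S : {set V}) (a b : V) :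
    is_tree e -> branch e S a b -> {in S, forall s, ecc e s < diameter e} ->
  exists e' : rel V, [/\ is_tree e', diameter e' = diameter e & wiener e < wiener e'].
Proof.
move=> [[e_sym e_irr] e_con e_acyc] brS ecc_small.
have [S' [a' [b' [c1 [c2 [brS' ecc_small' ebc1 ebc2 /and3P[c1a c2a c12]]]]]]] :=
  branch_fork e_sym e_irr e_con brS ecc_small.
have [aS bS eab cut] := brS'.
have regraft_better c : e b' c -> c != a' -> dist_out e S' b' < dist_out e S' c ->
    exists e' : rel V, [/\ is_tree e', diameter e' = diameter e & wiener e < wiener e'].
  move=> ebc ca lt_out; have cS := branch_nbr_out e_sym brS' ebc ca.
  exists (regraft e S' a' c); split.
  - exact: (regraft_tree e_sym e_irr e_con e_acyc aS bS cS eab ebc cut).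
  - exact: (diameter_regraft e_sym e_con aS bS cS eab ebc cut ecc_small').
  have := wiener_regraft e_sym e_con aS bS cS eab ebc cut.
  have S0 : 0 < #|S'| by apply/card_gt0P; exists a'.
  by rewrite -(ltn_pmul2l S0) in lt_out; lia.
have mid := dist_out_nbrs_lt e_sym e_irr e_con e_acyc bS ebc1 ebc2 c12.
case: (ltnP (dist_out e S' b') (dist_out e S' c1)) => [lt1|le1].
  exact: regraft_better ebc1 c1a lt1.
by apply: (regraft_better c2 ebc2 c2a); lia.
Qed.

Theorem mainTheorem3 (n d : nat) (V : finType) (e : rel V) (x : V) :
  is_tree e -> #|V| = n -> diameter e = d ->
  (forall (V' : finType) (e' : rel V'),
      is_tree e' -> #|V'| = n -> diameter e' = d -> wiener e' <= wiener e) ->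
  leaf e x -> ecc e x = d.
Proof.
move=> e_tree card_V diam_e wiener_max /card1P[y Ny].
apply/eqP; rewrite eqn_leq -{1}diam_e ecc_le_diameter leqNgt; apply/negP => ecc_x.
have x_only_y z : e x z = (z == y) by have := Ny z; rewrite !inE.
have brx : branch e [set x] x y.
  have [[_ e_irr] _ _] := e_tree; have exy : e x y by rewrite x_only_y.
  split; rewrite ?set11 //; first by rewrite inE; apply: contraTneq exy => ->; rewrite e_irr.
  by move=> s t; rewrite !inE => /eqP-> _ /[!x_only_y] /eqP.
have ecc_small : {in [set x], forall s, ecc e s < diameter e}.
  by move=> s /set1P ->; rewrite diam_e.
have [e' [tree' diam' lt_wiener]] := exists_wiener_gt e_tree brx ecc_small.
by have := wiener_max V e' tree' card_V; rewrite diam' diam_e leqNgt lt_wiener => /(_ erefl).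
Qed.
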